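(* Let $d$ be a compatible metric on the Cantor space $\mathbf{C}$ and let $h:\mathbf{C}\to\mathbf{C}$ be a homeomorphism which is an isometry such that the orbit $\mathrm{orb}(x,h)$ is nowhere dense in $\mathbf{C}$ for every $x\in\mathbf{C}$. Then there exist $\Phi=(\varphi^L,\varphi^U)$ such that $\mathbf{F}_\Phi$ is a Lelek fence and a homeomorphism $\hat h$ of $\mathbf{F}_\Phi$ which is an isometry such that $h$ is a factor of $\hat h$. Moreover, if $\{K_n\}$ is a sequence of closed, $h$-invariant, nowhere dense subsets of $\mathbf{C}$, then $\Phi$ can be chosen so that $\varphi^U(x)>0$ for all $x\in\bigcup_n K_n$.
   Context: For $\Phi=(\varphi^L,\varphi^U)$ with $\varphi^L,\varphi^U:\mathbf{C}\to[0,1]$, $\varphi^L$ lower semicontinuous, $\varphi^U$ upper semicontinuous, $\varphi^L\le\varphi^U$, the fence is $\mathbf{F}_\Phi=\{(x,t)\in\mathbf{C}\times[0,1]:\varphi^L(x)\le t\le\varphi^U(x)\}$ with the maximum metric of $\mathbf{C}\times[0,1]$. $\mathbf{F}_\Phi$ is a Lelek fence if $\varphi^L\equiv0$, $\varphi^U$ is positive on a dense subset of $\mathbf{C}$, and the graph $\{(x,\varphi^U(x)):x\in\mathbf{C}\}$ is dense in $\mathbf{F}_\Phi$. *)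

From HB Require Import structures.
From mathcomp Require Import all_boot all_order all_algebra.
From mathcomp Require Import all_classical all_reals all_analysis.
Set Implicit Arguments. Unset Strict Implicit. Unset Printing Implicit Defensive.
Import Order.TTheory GRing.Theory Num.Theory.
Local Open Scope classical_set_scope.
Local Open Scope ring_scope.

(* The Cantor space C is MathComp-Analysis' [cantor_space] (nat -> bool with
   the product topology). *)
Notation C := cantor_space.

Section Defs.
Variable R : realType.

Definition is_metric (T : Type) (d : T -> T -> R) : Prop :=
  (forall x y, 0 <= d x y) /\ (forall x y, d x y = 0 <-> x = y) /\
  (forall x y, d x y = d y x) /\ (forall x y z, d x z <= d x y + d y z).

Definition compatible_metric (d : C -> C -> R) : Prop :=
  is_metric d /\
  forall A : set C, open A <->
    (forall x, A x -> exists2 e : R, 0 < e & [set y | d x y < e] `<=` A).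

Definition homeo_of (h g : C -> C) : Prop :=
  continuous h /\ continuous g /\ cancel h g /\ cancel g h.

Definition isometry_of (d : C -> C -> R) (h : C -> C) : Prop :=
  forall x y, d (h x) (h y) = d x y.

(* orbit of x under the homeomorphism h (with inverse g): {h^n x : n in Z} *)
Definition orb (h g : C -> C) (x : C) : set C :=
  [set y | exists n : nat, y = iter n h x \/ y = iter n g x].

Definition nowhere_dense (A : set C) : Prop := (closure A)° = set0.

Definition lsc (f : C -> R) : Prop := forall a : R, open [set x | a < f x].
Definition usc (f : C -> R) : Prop := forall a : R, open [set x | f x < a].

Definition admissible (phiL phiU : C -> R) : Prop :=
  (forall x, 0 <= phiL x <= 1) /\ (forall x, 0 <= phiU x <= 1) /\
  lsc phiL /\ usc phiU /\ (forall x, phiL x <= phiU x).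

Definition fence (phiL phiU : C -> R) : set (C * R) :=
  [set p | phiL p.1 <= p.2 <= phiU p.1].

Definition maxd (d : C -> C -> R) (p q : C * R) : R :=
  Num.max (d p.1 q.1) `|p.2 - q.2|.

Definition lelek_fence (d : C -> C -> R) (phiL phiU : C -> R) : Prop :=
  (forall x, phiL x = 0) /\
  (exists D : set C, dense D /\ forall x, D x -> 0 < phiU x) /\
  (* the graph of phiU is dense in F_Phi (w.r.t. the maximum metric) *)
  (forall p, fence phiL phiU p -> forall e : R, 0 < e ->
     exists x : C, maxd d p (x, phiU x) < e).

Definition fence_isometric_homeo (d : C -> C -> R) (F : set (C * R))
    (hh gg : C * R -> C * R) : Prop :=
  (forall p, F p -> F (hh p)) /\ (forall p, F p -> F (gg p)) /\
  (forall p, F p -> gg (hh p) = p) /\ (forall p, F p -> hh (gg p) = p) /\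
  (forall p q, F p -> F q -> maxd d (hh p) (hh q) = maxd d p q) /\
  (forall p q, F p -> F q -> maxd d (gg p) (gg q) = maxd d p q).

Definition is_factor (d : C -> C -> R) (F : set (C * R))
    (hh : C * R -> C * R) (h : C -> C) : Prop :=
  exists pi : C * R -> C,
    (forall p, F p -> forall e : R, 0 < e -> exists2 r : R, 0 < r &
       forall q, F q -> maxd d p q < r -> d (pi p) (pi q) < e) /\
    (forall x : C, exists2 p, F p & pi p = x) /\
    (forall p, F p -> pi (hh p) = h (pi p)).

End Defs.

(* The fence lies under a single upper semicontinuous h-invariant function
   roof : C -> [0, 1] (with phiL = 0), so (x, t) |-> (h x, t) is an isometry of
   it, with the first projection as factor map onto h. The roof is the infimum
   of 1 and of countably many continuous h-invariant tents
   y |-> c + L * dist (y, orb q). The k-th apex q is chosen in a prescribed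
   cylinder but off the closure of the nowhere dense invariant set A formed by
   the earlier orbits and K_0, ..., K_k, and L is so large that the k-th tent
   exceeds 1 on A. Hence roof q = c, roof > 0 on every K_m, and since the stages
   run through all pairs (cylinder, rational height), the graph of roof is dense
   in the fence. *)

From HB Require Import structures.
From mathcomp Require Import all_boot all_order all_algebra.
From mathcomp Require Import all_classical all_reals all_analysis.
From mathcomp Require Import lra.
Set Implicit Arguments. Unset Strict Implicit. Unset Printing Implicit Defensive.
Import Order.TTheory GRing.Theory Num.Theory.
Local Open Scope classical_set_scope.
Local Open Scope ring_scope.

Definition cyl (s : seq bool) : set C :=
  [set y | forall i, (i < size s)%N -> y i = nth false s i].

Lemma cyl_ne s : cyl s !=set0.
Proof. by exists (nth false s). Qed.

Lemma open_cyl s : open (cyl s).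
Proof.
have -> : cyl s = \bigcap_(i < size s) ((@^~ i) @^-1` [set nth false s i]).
  by apply/seteqP; split => y /= H i /H.
rewrite bigcap_mkord; apply: big_ind => [|A B|i _]; [exact: openT|exact: openI|].
apply: open_comp; last exact: discrete_open.
by move=> y _; exact: (@proj_continuous nat (fun=> bool) i).
Qed.

Lemma cyl_mkseqP (x y : C) N :
  cyl (mkseq x N) y <-> forall i, (i < N)%N -> y i = x i.
Proof. by rewrite /cyl size_mkseq; split => yx i iN; rewrite yx ?nth_mkseq. Qed.

(* Otherwise points y_N agreeing with x below N but lying outside O would
   converge to x. *)
Lemma open_cyl_mkseq (O : set C) (x : C) : open O -> O x ->
  exists N, cyl (mkseq x N) `<=` O.
Proof.
move=> oO Ox; apply: contrapT => /forallNP noN.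
have /(_ _)/cid yP N : exists y, cyl (mkseq x N) y /\ ~ O y.
  by have /existsNP [y /not_implyP] := noN N; exists y.
pose y N := projT1 (yP N).
have y_cvg : y @ \oo --> (x : C).
  apply/cvg_sup => i U [V] [[W] oW <-] WxN WU.
  apply: (filterS WU); rewrite nbhs_simpl; exists i.+1 => // N /= iN.
  by have [/cyl_mkseqP yx _] := projT2 (yP N); rewrite /y yx.
have [M _ /(_ M (leqnn M))] : \forall N \near \oo, O (y N).
  by apply: y_cvg; exact: open_nbhs_nbhs.
exact: (projT2 (yP M)).2.
Qed.

Lemma nowhere_dense0 : nowhere_dense set0.
Proof. by rewrite /nowhere_dense closure0 interior0. Qed.

Lemma nowhere_dense_avoid (U A : set C) : open U -> U !=set0 -> nowhere_dense A ->
  U `&` ~` closure A !=set0.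
Proof.
move=> oU [u Uu] ndA; apply/set0P/negP => /eqP UA0.
have : U `<=` (closure A)°.
  rewrite -open_subsetE // => z Uz; apply: contrapT => nAz.
  by have : (U `&` ~` closure A) z by []; rewrite UA0.
by rewrite ndA => /(_ u Uu).
Qed.

Lemma nowhere_denseU (A B : set C) : nowhere_dense A -> nowhere_dense B ->
  nowhere_dense (A `|` B).
Proof.
move=> ndA ndB; apply/seteqP; split=> // x ABx.
have oAc : open ((closure (A `|` B))° `&` ~` closure A).
  by apply: openI; [exact: open_interior|exact/closed_openC/closed_closure].
have UA : (closure (A `|` B))° `&` ~` closure A !=set0.
  by apply: nowhere_dense_avoid ndA; [exact: open_interior|exists x].
have [z [[ABz nAz] nBz]] := nowhere_dense_avoid oAc UA ndB.
by move: (interior_subset ABz); rewrite closureU => -[].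
Qed.

Lemma nowhere_dense_bigcup_ord (A : nat -> set C) n :
  (forall i, (i < n)%N -> nowhere_dense (A i)) ->
  nowhere_dense (\bigcup_(i < n) A i).
Proof.
move=> ndA; rewrite bigcup_mkord; apply: big_ind => [|B B'|i _].
- exact: nowhere_dense0.
- exact: nowhere_denseU.
- exact: ndA.
Qed.

(* Stage k of the construction aims at the cylinder and the height
   nat_ratio a n coded by k; every triple occurs. *)
Definition target (k : nat) : seq bool * nat * nat :=
  odflt ([::], 0, 0)%N (unpickle k).

Lemma target_pickle t : target (pickle t) = t.
Proof. by rewrite /target pickleK. Qed.

Definition nat_ratio (R : realType) (a n : nat) : R := a.+1%:R / n.+1%:R.

Lemma nat_ratio_gt0 (R : realType) a n : 0 < nat_ratio R a n.
Proof. by rewrite divr_gt0 ?ltr0n. Qed.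

Lemma nat_ratio_between (R : realType) (t e : R) : 0 <= t -> 0 < e ->
  exists a n, t < nat_ratio R a n < t + e.
Proof.
move=> t0 e0; pose n := Num.trunc e^-1; pose a := Num.trunc (t * n.+1%:R).
have n0 : (0 : R) < n.+1%:R by rewrite ltr0n.
have en : 1 < e * n.+1%:R by rewrite -ltr_pdivrMl // mulr1 truncnS_gt.
have /andP [ta ta1] : a%:R <= t * n.+1%:R < a.+1%:R.
  by apply: trunc_itv; rewrite mulr_ge0 // ltW.
exists a, n; apply/andP; split; first by rewrite ltr_pdivlMr.
by rewrite ltr_pdivrMr // mulrDl; rewrite -natr1 in ta1 *; lra.
Qed.

Record tent (R : realType) := Tent { apex : C; height : R; slope : R }.

Section CompatibleMetric.
Variables (R : realType) (d : C -> C -> R).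
Hypothesis d_compat : compatible_metric d.

Lemma d_ge0 x y : 0 <= d x y. Proof. by case: d_compat => -[]. Qed.
Lemma d_xx x : d x x = 0. Proof. by case: d_compat => -[_ [/(_ x x) [_ ->]]]. Qed.
Lemma dC x y : d x y = d y x. Proof. by case: d_compat => -[_ [_ []]]. Qed.
Lemma d_triangle x y z : d x z <= d x y + d y z.
Proof. by case: d_compat => -[_ [_ [_]]]. Qed.

Lemma open_dP (A : set C) :
  open A <-> forall x, A x -> exists2 e : R, 0 < e & [set y | d x y < e] `<=` A.
Proof. by case: d_compat. Qed.

Lemma open_d_ball x (e : R) : open [set y | d x y < e].
Proof.
apply/open_dP => y /= xy; exists (e - d x y); first by rewrite subr_gt0.
by move=> z /= yz; have := d_triangle x y z; lra.
Qed.

Lemma open_lipschitz_gt (phi : C -> R) (L c : R) : 0 <= L ->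
  (forall x y, phi x - L * d x y <= phi y) -> open [set y | c < phi y].
Proof.
move=> L_ge0 phi_lip; apply/open_dP => x /= cx.
exists ((phi x - c) / (L + 1)); first by apply: divr_gt0; lra.
move=> y /=; rewrite ltr_pdivlMr; last lra.
have := phi_lip x y; have := d_ge0 x y; lra.
Qed.

Lemma open_lipschitz_lt (phi : C -> R) (L a : R) : 0 <= L ->
  (forall x y, phi x - L * d x y <= phi y) -> open [set y | phi y < a].
Proof.
move=> L_ge0 phi_lip; apply/open_dP => x /= xa.
exists ((a - phi x) / (L + 1)); first by apply: divr_gt0; lra.
move=> y /=; rewrite ltr_pdivlMr; last lra.
have := phi_lip y x; have := d_ge0 x y; rewrite (dC y x); lra.
Qed.

Lemma admissible_zero (phi : C -> R) :
  (forall x, 0 <= phi x <= 1) -> usc phi -> admissible (fun=> 0) phi.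
Proof.
move=> phi01 phi_usc; split=> [x|]; first by rewrite lexx ler01.
split=> //; split; first by move=> a; apply/open_dP => x /= a0; exists 1.
by split=> // x; case/andP: (phi01 x).
Qed.

Section IsometricOrbits.
Variables h g : C -> C.
Hypotheses (hg : homeo_of h g) (h_iso : isometry_of d h).

Lemma hK : cancel h g. Proof. by case: hg => _ [_ []]. Qed.
Lemma gK : cancel g h. Proof. by case: hg => _ [_ []]. Qed.

Lemma g_iso : isometry_of d g.
Proof. by move=> x y; rewrite -h_iso !gK. Qed.

Lemma iter_gK n : cancel (iter n g) (iter n h).
Proof. by elim: n => // n IH y; rewrite iterSr iterS gK. Qed.
Lemma iter_hK n : cancel (iter n h) (iter n g).
Proof. by elim: n => // n IH y; rewrite iterSr iterS hK. Qed.

Lemma iter_iso (f : C -> C) n : isometry_of d f -> isometry_of d (iter n f).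
Proof. by move=> f_iso; elim: n => // n IH x y; rewrite !iterS f_iso. Qed.

Definition hg_invariant (A : set C) : Prop := forall z, A z -> A (h z) /\ A (g z).

Lemma orb_refl x : orb h g x x. Proof. by exists 0%N; left. Qed.

Lemma hg_invariant_orb x : hg_invariant (orb h g x).
Proof.
move=> _ [n [->|->]]; split.
- by exists n.+1; left.
- by case: n => [|n]; [exists 1%N; right|exists n; left; rewrite iterS hK].
- by case: n => [|n]; [exists 1%N; left|exists n; right; rewrite iterS gK].
- by exists n.+1; right.
Qed.

Lemma hg_invariantU A B : hg_invariant A -> hg_invariant B -> hg_invariant (A `|` B).
Proof. by move=> iA iB z [/iA|/iB] [? ?]; split; [left|left|right|right]. Qed.

Lemma hg_invariant_bigcup I (P : set I) (F : I -> set C) :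
  (forall i, P i -> hg_invariant (F i)) -> hg_invariant (\bigcup_(i in P) F i).
Proof. by move=> iF z [i Pi /(iF i Pi) [? ?]]; split; exists i. Qed.

Lemma hg_invariant_image A : h @` A = A -> hg_invariant A.
Proof.
move=> hA z Az; split; first by rewrite -hA; exists z.
by move: Az; rewrite -{1}hA => -[w Aw <-]; rewrite hK.
Qed.

Lemma orb_sub_invariant A y : hg_invariant A -> A y -> orb h g y `<=` A.
Proof.
move=> iA Ay _ [n [->|->]]; elim: n => //= n IH.
  exact: (iA _ IH).1.
exact: (iA _ IH).2.
Qed.

Lemma orb_iso_transfer y q z : orb h g q z -> exists2 w, orb h g y w & d y z = d q w.
Proof.
case=> n [->|->].
- exists (iter n g y); first by exists n; right.
  by rewrite -{1}(iter_gK n y) (iter_iso n h_iso) dC.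
- exists (iter n h y); first by exists n; left.
  by rewrite -{1}(iter_hK n y) (iter_iso n g_iso) dC.
Qed.

Definition orbit_dist (x q : C) : R := inf [set d x z | z in orb h g q].

Lemma orbit_dist_le x q z : orb h g q z -> orbit_dist x q <= d x z.
Proof.
by move=> qz; apply: ge_inf; [exists 0 => _ [w _ <-]; exact: d_ge0|exists z].
Qed.

Lemma orbit_dist_lb x q b :
  (forall z, orb h g q z -> b <= d x z) -> b <= orbit_dist x q.
Proof.
move=> lb; apply: lb_le_inf => [|_ [z qz <-]]; last exact: lb.
by exists (d x q), q; first exact: orb_refl.
Qed.

Lemma orbit_dist_ge0 x q : 0 <= orbit_dist x q.
Proof. by apply: orbit_dist_lb => z _; exact: d_ge0. Qed.

Lemma orbit_dist_self q : orbit_dist q q = 0.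
Proof.
by apply/eqP; rewrite eq_le orbit_dist_ge0 -(d_xx q) orbit_dist_le //; exact: orb_refl.
Qed.

Lemma orbit_dist_lipschitz x y q : orbit_dist x q - d x y <= orbit_dist y q.
Proof.
apply: orbit_dist_lb => z qz.
by have := orbit_dist_le x qz; have := d_triangle x y z; lra.
Qed.

Lemma orbit_dist_h x q : orbit_dist (h x) q = orbit_dist x q.
Proof.
apply/eqP; rewrite eq_le; apply/andP; split; apply: orbit_dist_lb => z qz.
- by rewrite -h_iso; apply: orbit_dist_le; exact: (hg_invariant_orb qz).1.
- by rewrite -[z]gK h_iso; apply: orbit_dist_le; exact: (hg_invariant_orb qz).2.
Qed.

Lemma orbit_distC x q : orbit_dist x q = orbit_dist q x.
Proof.
suff le_dist y p : orbit_dist y p <= orbit_dist p y.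
  by apply/eqP; rewrite eq_le !le_dist.
apply: orbit_dist_lb => z /(orb_iso_transfer p) [w pw ->].
exact: orbit_dist_le.
Qed.

Definition tent_at (p : tent R) (y : C) : R :=
  height p + slope p * orbit_dist y (apex p).

Lemma tent_at_apex p : tent_at p (apex p) = height p.
Proof. by rewrite /tent_at orbit_dist_self mulr0 addr0. Qed.

Lemma tent_at_ge_height p y : 0 <= slope p -> height p <= tent_at p y.
Proof. by move=> s0; rewrite /tent_at lerDl mulr_ge0 // orbit_dist_ge0. Qed.

Lemma tent_at_h p y : tent_at p (h y) = tent_at p y.
Proof. by rewrite /tent_at orbit_dist_h. Qed.

Lemma tent_at_lipschitz p x y :
  0 <= slope p -> tent_at p x - slope p * d x y <= tent_at p y.
Proof.
move=> s0; have := ler_wpM2l s0 (orbit_dist_lipschitz x y (apex p)).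
rewrite /tent_at; lra.
Qed.

Lemma tent_at_ge1 p A y : hg_invariant A -> A y -> 0 <= height p -> 0 < slope p ->
  (forall w, A w -> 1 <= slope p * d (apex p) w) -> 1 <= tent_at p y.
Proof.
move=> iA Ay h0 s0 steep.
have : (slope p)^-1 <= orbit_dist y (apex p).
  rewrite orbit_distC; apply: orbit_dist_lb => w /(orb_sub_invariant iA Ay) /steep.
  by move=> s_dw; rewrite -(ler_pM2l s0) mulfV ?gt_eqF.
move=> /(ler_wpM2l (ltW s0)); rewrite mulfV ?gt_eqF // /tent_at; lra.
Qed.

Lemma fence_isometric_homeo_lift (phiL phiU : C -> R) :
  (forall x, phiL (h x) = phiL x) -> (forall x, phiU (h x) = phiU x) ->
  fence_isometric_homeo d (fence phiL phiU)
    (fun p => (h p.1, p.2)) (fun p => (g p.1, p.2)).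
Proof.
move=> hL hU; have gL x : phiL (g x) = phiL x by rewrite -{2}[x]gK hL.
have gU x : phiU (g x) = phiU x by rewrite -{2}[x]gK hU.
rewrite /fence_isometric_homeo /fence /maxd.
split; first by move=> [x t] /=; rewrite hL hU.
split; first by move=> [x t] /=; rewrite gL gU.
split; first by move=> [x t] _ /=; rewrite hK.
split; first by move=> [x t] _ /=; rewrite gK.
by split=> -[x t] [y s] _ _ /=; rewrite ?h_iso ?g_iso.
Qed.

Lemma is_factor_fst (phiL phiU : C -> R) : (forall x, phiL x <= phiU x) ->
  is_factor d (fence phiL phiU) (fun p => (h p.1, p.2)) h.
Proof.
move=> LU; exists fst; split; [|split] => //.
- by move=> p _ e e0; exists e => // q _; apply: le_lt_trans; rewrite /maxd le_max lexx.
- by move=> x; exists (x, phiL x) => //; rewrite /fence /= lexx LU.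
Qed.

Section Construction.
Variable K : nat -> set C.
Hypotheses (orb_nd : forall x, nowhere_dense (orb h g x))
  (K_inv : forall n, h @` K n = K n) (K_nd : forall n, nowhere_dense (K n)).

Definition target_cyl k := cyl (target k).1.1.
Definition target_height k : R := nat_ratio R (target k).1.2 (target k).2.

Section Step.
Variables (k : nat) (F : C -> R) (A : set C).

(* If F exceeds the target height nowhere on the cylinder, that height is
   given up and the whole cylinder is used. *)
Definition target_region : set C :=
  let U := target_cyl k `&` [set y | target_height k < F y] in
  if pselect (U !=set0) then U else target_cyl k.

Definition next_apex : C := xget point (target_region `&` ~` closure A).

Definition next_radius : R :=
  xget 1 [set e | 0 < e /\ [set y | d next_apex y < e] `<=` ~` closure A].

Definition next_tent : tent R :=
  Tent next_apex (Num.min (target_height k) (F next_apex)) next_radius^-1.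

Lemma next_slope_gt0 : 0 < slope next_tent.
Proof. by rewrite invr_gt0 /next_radius; case: xgetP => [e _ []|]. Qed.

Lemma next_height_le : height next_tent <= F (apex next_tent).
Proof. by rewrite ge_min lexx orbT. Qed.

Lemma next_height_gt0 : 0 < F next_apex -> 0 < height next_tent.
Proof. by move=> F0; rewrite lt_min nat_ratio_gt0. Qed.

Hypotheses (F_open : forall c, open [set y | c < F y]) (A_nd : nowhere_dense A).

Lemma next_apexP : target_region next_apex /\ ~ closure A next_apex.
Proof.
apply: (@xgetPex _ point (target_region `&` ~` closure A)).
apply: nowhere_dense_avoid A_nd; rewrite /target_region.
- by case: ifP => _; [apply: openI; [exact: open_cyl|exact: F_open]|exact: open_cyl].
- by case: pselect => /= [//|_]; exact: cyl_ne.
Qed.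

Lemma next_apex_cyl : target_cyl k next_apex.
Proof. by have [] := next_apexP; rewrite /target_region; case: ifP => // _ []. Qed.

Lemma next_height_target : (exists2 y, target_cyl k y & target_height k < F y) ->
  height next_tent = target_height k.
Proof.
move=> [y ky Fy]; apply: min_l; apply: ltW.
have [] := next_apexP; rewrite /target_region.
by case: pselect => [_ [] //|[]] /=; exists y.
Qed.

Lemma next_tent_steep w : A w -> 1 <= slope next_tent * d (apex next_tent) w.
Proof.
move=> Aw; have [r0 ball_r] : 0 < next_radius /\
    [set y | d next_apex y < next_radius] `<=` ~` closure A.
  apply: (@xgetPex _ 1 [set e | 0 < e /\ _ `<=` _]).
  have [e e0 sub] := (open_dP _).1
    (closed_openC (@closed_closure _ A)) _ next_apexP.2.
  by exists e.
rewrite /= -(mulVf (lt0r_neq0 r0)) ler_pM2l ?invr_gt0 //.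
by rewrite leNgt; apply/negP => /ball_r; apply; exact: subset_closure.
Qed.

End Step.

Definition tents_min (st : nat -> tent R) (k : nat) (y : C) : R :=
  \big[Num.min/1]_(j < k) tent_at (st j) y.

Definition avoided (st : nat -> tent R) (k : nat) : set C :=
  (\bigcup_(j < k) orb h g (apex (st j))) `|` \bigcup_(m < k.+1) K m.

Definition next_tent_of (st : nat -> tent R) k :=
  next_tent k (tents_min st k) (avoided st k).

(* [hist k j] is the j-th tent for j < k (and junk beyond); each tent is built
   from all the earlier ones. *)
Fixpoint hist (k : nat) : nat -> tent R :=
  if k is k'.+1 then
    fun j => if j == k' then next_tent_of (hist k') k' else hist k' j
  else fun=> Tent point 1 0.

Definition tent_seq k := next_tent_of (hist k) k.

Lemma hist_lt j k : (j < k)%N -> hist k j = tent_seq j.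
Proof.
elim: k => // k IH; rewrite ltnS leq_eqVlt => /predU1P [->|jk] /=.
  by rewrite eqxx.
by rewrite (ltn_eqF jk) IH.
Qed.

Lemma tent_seqE k : tent_seq k = next_tent_of tent_seq k.
Proof.
rewrite /tent_seq /next_tent_of; congr next_tent.
- by apply/funext => y; apply: eq_bigr => j _; rewrite hist_lt.
- by congr setU; apply: eq_bigcupr => j jk; rewrite hist_lt.
Qed.

Lemma tent_seq_slope_gt0 k : 0 < slope (tent_seq k).
Proof. exact: next_slope_gt0. Qed.

Lemma open_tents_min_gt k c : open [set y | c < tents_min tent_seq k y].
Proof.
have -> : [set y | c < tents_min tent_seq k y] =
    [set _ | c < 1] `&` \bigcap_(j < k) [set y | c < tent_at (tent_seq j) y].
  apply/seteqP; split=> y /=.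
  - by move/bigmin_gtP => [c1 ct]; split=> // j /= jk; exact: (ct (Ordinal jk)).
  - by move=> [c1 ct]; apply/bigmin_gtP; split=> // j _; exact: (ct j (ltn_ord j)).
apply: openI; first by apply/open_dP => x c1; exists 1.
rewrite bigcap_mkord; apply: big_ind => [|U V|j _]; [exact: openT|exact: openI|].
have s0 := ltW (tent_seq_slope_gt0 j).
by apply: (open_lipschitz_gt _ s0) => x y; exact: tent_at_lipschitz.
Qed.

Lemma avoided_nd k : nowhere_dense (avoided tent_seq k).
Proof. by apply: nowhere_denseU; apply: nowhere_dense_bigcup_ord. Qed.

Lemma avoided_invariant k : hg_invariant (avoided tent_seq k).
Proof.
apply: hg_invariantU; apply: hg_invariant_bigcup => j _.
  exact: hg_invariant_orb.
exact: hg_invariant_image.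
Qed.

Lemma tents_min_le1 k y : tents_min tent_seq k y <= 1.
Proof. exact: bigmin_le_id. Qed.

Lemma tents_min_le_tent k j y : (j < k)%N ->
  tents_min tent_seq k y <= tent_at (tent_seq j) y.
Proof. by move=> jk; exact: (bigmin_le _ (Ordinal jk)). Qed.

Lemma tents_min_gt0 k y : (forall j, (j < k)%N -> 0 < height (tent_seq j)) ->
  0 < tents_min tent_seq k y.
Proof.
move=> h0; apply/bigmin_gtP; split=> // j _; apply: lt_le_trans (h0 j (ltn_ord j)) _.
exact/tent_at_ge_height/ltW/tent_seq_slope_gt0.
Qed.

Lemma tent_seq_height_gt0 k : 0 < height (tent_seq k).
Proof.
elim/ltn_ind: k => k IH; rewrite tent_seqE; apply: next_height_gt0.
exact: tents_min_gt0.
Qed.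

Lemma tent_seq_height_le k :
  height (tent_seq k) <= tents_min tent_seq k (apex (tent_seq k)).
Proof. by rewrite tent_seqE; exact: next_height_le. Qed.

Lemma tent_seq_cyl k : target_cyl k (apex (tent_seq k)).
Proof.
rewrite tent_seqE; apply: next_apex_cyl;
  [exact: open_tents_min_gt|exact: avoided_nd].
Qed.

Lemma tent_seq_target k :
  (exists2 y, target_cyl k y & target_height k < tents_min tent_seq k y) ->
  height (tent_seq k) = target_height k.
Proof.
rewrite tent_seqE; apply: next_height_target;
  [exact: open_tents_min_gt|exact: avoided_nd].
Qed.

Lemma tent_seq_ge1 j y : avoided tent_seq j y -> 1 <= tent_at (tent_seq j) y.
Proof.
move=> Ay; apply: (tent_at_ge1 (@avoided_invariant j) Ay).
- exact/ltW/tent_seq_height_gt0.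
- exact: tent_seq_slope_gt0.
- rewrite tent_seqE; apply: next_tent_steep;
    [exact: open_tents_min_gt|exact: avoided_nd].
Qed.

Lemma tent_seq_gt0 j y : 0 < tent_at (tent_seq j) y.
Proof.
apply: lt_le_trans (tent_seq_height_gt0 j) _.
exact/tent_at_ge_height/ltW/tent_seq_slope_gt0.
Qed.

Definition roof (x : C) : R :=
  inf ([set 1] `|` range (fun j => tent_at (tent_seq j) x)).

Lemma roof_has_lbound x :
  has_lbound ([set 1] `|` range (fun j => tent_at (tent_seq j) x)).
Proof. by exists 0 => _ [->|[j _ <-]] //; exact/ltW/tent_seq_gt0. Qed.

Lemma roof_le1 x : roof x <= 1.
Proof. by apply: (ge_inf (roof_has_lbound x)); left. Qed.

Lemma roof_le_tent x j : roof x <= tent_at (tent_seq j) x.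
Proof. by apply: (ge_inf (roof_has_lbound x)); right; exists j. Qed.

Lemma roof_ge x b : b <= 1 -> (forall j, b <= tent_at (tent_seq j) x) -> b <= roof x.
Proof.
by move=> b1 bt; apply: lb_le_inf => [|_ [->|[j _ <-]]] //; exists 1; left.
Qed.

Lemma roof_ge0 x : 0 <= roof x.
Proof. by apply: roof_ge => // j; exact/ltW/tent_seq_gt0. Qed.

Lemma roof_ltP x a : roof x < a -> 1 < a \/ exists j, tent_at (tent_seq j) x < a.
Proof.
move=> /(inf_lt (ex_intro _ 1 (or_introl erefl))) [_ [->|[j _ <-]] ra].
  by left.
by right; exists j.
Qed.

Lemma roof_h x : roof (h x) = roof x.
Proof. by rewrite /roof; under eq_fun do rewrite tent_at_h. Qed.

Lemma roof_le_tents_min k x : roof x <= tents_min tent_seq k x.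
Proof.
by apply/bigmin_geP; split=> [|j _]; [exact: roof_le1|exact: roof_le_tent].
Qed.

Lemma tent_seq_height_le1 k : height (tent_seq k) <= 1.
Proof. exact: le_trans (tent_seq_height_le k) (tents_min_le1 _ _). Qed.

(* At the k-th apex, earlier tents are at least the k-th height by its choice,
   later ones are at least 1 since they avoid the orbit of that apex. *)
Lemma roof_apex k : roof (apex (tent_seq k)) = height (tent_seq k).
Proof.
apply/eqP; rewrite eq_le; apply/andP; split.
  by rewrite -tent_at_apex; exact: roof_le_tent.
apply: roof_ge => [|j]; first exact: tent_seq_height_le1.
have [jk|kj|->] := ltngtP j k; last by rewrite tent_at_apex.
- by apply: le_trans (tent_seq_height_le k) _; exact: tents_min_le_tent.
- apply: le_trans (tent_seq_height_le1 k) (tent_seq_ge1 _).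
  by left; exists k => //; exact: orb_refl.
Qed.

Lemma roof_K_gt0 m y : K m y -> 0 < roof y.
Proof.
move=> Ky; have m0 := @tents_min_gt0 m y (fun j _ => tent_seq_height_gt0 j).
apply: lt_le_trans m0 (roof_ge (tents_min_le1 _ _) _) => j.
have [jm|mj] := ltnP j m; first exact: tents_min_le_tent.
by apply: le_trans (tents_min_le1 _ _) (tent_seq_ge1 _); right; exists m.
Qed.

Lemma usc_roof : usc roof.
Proof.
move=> a; apply/open_dP => x /= /roof_ltP [a1|[j ja]].
  by exists 1 => // y _ /=; exact: le_lt_trans (roof_le1 y) a1.
have s0 := ltW (tent_seq_slope_gt0 j).
have lip x y := tent_at_lipschitz x y s0.
have [r r0 sub] := (open_dP _).1 (open_lipschitz_lt _ s0 lip) x ja.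
by exists r => // y /sub; exact: le_lt_trans (roof_le_tent y j).
Qed.

Lemma roof_graph_dense x t e : 0 <= t <= roof x -> 0 < e ->
  exists y, maxd d (x, t) (y, roof y) < e.
Proof.
move=> /andP [t0 tx] e0; have [near|far] := ltP (roof x - t) e.
  by exists x; rewrite /maxd /= d_xx gt_max e0 ler0_norm ?subr_le0 //; lra.
have [N ball_N] : exists N, cyl (mkseq x N) `<=` [set y | d x y < e].
  by apply: open_cyl_mkseq; [exact: open_d_ball|rewrite /= d_xx].
have [a [n /andP [ta ate]]] := nat_ratio_between t0 e0.
pose k := pickle (mkseq x N, a, n).
have cyl_k : target_cyl k = cyl (mkseq x N) by rewrite /target_cyl target_pickle.
have height_k : target_height k = nat_ratio R a n.
  by rewrite /target_height target_pickle.
have reach : exists2 y, target_cyl k y & target_height k < tents_min tent_seq k y.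
  exists x; first by rewrite cyl_k; exact/cyl_mkseqP.
  by rewrite height_k; apply: lt_le_trans (roof_le_tents_min k x); lra.
exists (apex (tent_seq k)); rewrite roof_apex (tent_seq_target reach) /maxd /= gt_max.
apply/andP; split; first by apply: ball_N; rewrite -cyl_k; exact: tent_seq_cyl.
by rewrite height_k ltr0_norm ?subr_lt0 //; lra.
Qed.

Lemma dense_roof_gt0 : dense [set y | 0 < roof y].
Proof.
move=> O [x Ox] oO; have [N sub] := open_cyl_mkseq oO Ox.
pose k := pickle (mkseq x N, 0%N, 0%N).
exists (apex (tent_seq k)); split.
  by apply: sub; have := @tent_seq_cyl k; rewrite /target_cyl target_pickle.
by rewrite /= roof_apex; exact: tent_seq_height_gt0.
Qed.

Lemma exists_lelek_fence : exists (phiL phiU : C -> R) (hh gg : C * R -> C * R),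
  admissible phiL phiU /\ lelek_fence d phiL phiU /\
  fence_isometric_homeo d (fence phiL phiU) hh gg /\
  is_factor d (fence phiL phiU) hh h /\
  (forall x, (\bigcup_n K n) x -> 0 < phiU x).
Proof.
exists (fun=> 0), roof, (fun p => (h p.1, p.2)), (fun p => (g p.1, p.2)).
split; first by apply: admissible_zero usc_roof => x; rewrite roof_ge0 roof_le1.
split.
  split=> //; split.
    by exists [set y | 0 < roof y]; split; [exact: dense_roof_gt0|].
  by move=> [x t] /= tx e e0; exact: roof_graph_dense.
split; first exact: fence_isometric_homeo_lift roof_h.
split; first exact/is_factor_fst/roof_ge0.
by move=> x [m _]; exact: roof_K_gt0.
Qed.

End Construction.
End IsometricOrbits.
End CompatibleMetric.

Theorem theorem6p5 (R : realType) (d : C -> C -> R) (h g : C -> C) :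
  compatible_metric d -> homeo_of h g -> isometry_of d h ->
  (forall x, nowhere_dense (orb h g x)) ->
  (exists (phiL phiU : C -> R) (hh gg : C * R -> C * R),
     admissible phiL phiU /\ lelek_fence d phiL phiU /\
     fence_isometric_homeo d (fence phiL phiU) hh gg /\
     is_factor d (fence phiL phiU) hh h) /\
  (forall K : nat -> set C,
     (forall n, closed (K n) /\ h @` K n = K n /\ nowhere_dense (K n)) ->
     exists (phiL phiU : C -> R) (hh gg : C * R -> C * R),
       admissible phiL phiU /\ lelek_fence d phiL phiU /\
       fence_isometric_homeo d (fence phiL phiU) hh gg /\
       is_factor d (fence phiL phiU) hh h /\
       (forall x, (\bigcup_n K n) x -> 0 < phiU x)).
Proof.
move=> d_compat hg h_iso orb_nd; split.
  have [phiL [phiU [hh [gg [? [? [? [? _]]]]]]]] := exists_lelek_fence d_compat hg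
    h_iso orb_nd (fun=> image_set0 h) (fun=> nowhere_dense0).
  by exists phiL, phiU, hh, gg.
move=> K K_props; have K_inv n := (K_props n).2.1; have K_nd n := (K_props n).2.2.
by have := exists_lelek_fence d_compat hg h_iso orb_nd K_inv K_nd.
Qed.
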